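(* Let $Q$ be a $\partial_\psi$-delta operator with $\partial_\psi$-basic polynomial sequence $(q_n)$, let $S\in\Sigma_\psi$ be invertible and let $(s_n)$, $s_n=S^{-1}q_n$, be the Sheffer $\psi$-polynomials of $Q$ relative to $S$. Then for every $T\in\Sigma_\psi$, every $p\in P$ and every $y\in F$, $$T\,p(x+_\psi y)=\sum_{k\ge0}\frac{s_k(y)}{k_\psi!}\,Q^k\,S\,T\,p(x),$$ where $p(x+_\psi y):=(E^y(\partial_\psi)p)(x)$ and operators act in the variable $x$.
   Context: Let $F$ be a field of characteristic $0$, $P=F[x]$. Fix $(\psi_n)_{n\ge0}$ in $F$ with $\psi_0=1$, $\psi_n\ne0$, $\psi_{-1}=0$; $n_\psi=\psi_{n-1}/\psi_n$, $n_\psi!=1/\psi_n$, $0_\psi!=1$. $\partial_\psi x^n=n_\psi x^{n-1}$ (linear); $E^a(\partial_\psi)=\sum_k\frac{a^k}{k_\psi!}\partial_\psi^k$. $\Sigma_\psi$: algebra of linear operators on $P$ commuting with all $E^a(\partial_\psi)$. A $\partial_\psi$-delta operator is $Q\in\Sigma_\psi$ with $Q(x)$ a nonzero constant; its $\partial_\psi$-basic sequence: $\deg q_n=n$, $q_0=1$, $q_n(0)=0$ for $n>0$, $Qq_n=n_\psi q_{n-1}$. Sheffer $\psi$-polynomials of $Q$: $\deg s_n=n$, $s_0$ a nonzero constant, $Qs_n=n_\psi s_{n-1}$. *)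

From mathcomp Require Import all_boot all_order all_algebra.
Set Implicit Arguments. Unset Strict Implicit. Unset Printing Implicit Defensive.
Import GRing.Theory.
Local Open Scope ring_scope.

Section PsiCalculus.
Variable F : fieldType.
Variable psi : nat -> F.

(* n_psi = psi_{n-1}/psi_n, with psi_{-1} = 0, so 0_psi = 0 *)
Definition psinum (n : nat) : F :=
  match n with 0%N => 0 | m.+1 => psi m / psi m.+1 end.

Definition psifact (n : nat) : F := (psi n)^-1.

(* the linear operator x^n |-> n_psi x^(n-1) *)
Definition dpsi (p : {poly F}) : {poly F} :=
  \poly_(i < size p) (psinum i.+1 * p`_i.+1).

(* E^a(d_psi) p = sum_k a^k / k_psi! * d_psi^k p ; the terms with
   k >= size p vanish, so the sum is truncated there *)
Definition Epsi (a : F) (p : {poly F}) : {poly F} :=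
  \sum_(k < size p) ((a ^+ k / psifact k) *: iter k dpsi p).

Definition lin_op (T : {poly F} -> {poly F}) : Prop :=
  forall (c : F) (p q : {poly F}), T (c *: p + q) = c *: T p + T q.

Definition in_Sigma_psi (T : {poly F} -> {poly F}) : Prop :=
  lin_op T /\ forall (a : F) (p : {poly F}), T (Epsi a p) = Epsi a (T p).

Definition psi_delta (Q : {poly F} -> {poly F}) : Prop :=
  in_Sigma_psi Q /\ exists c : F, c != 0 /\ Q 'X = c%:P.

Definition psi_basic_seq (Q : {poly F} -> {poly F}) (q : nat -> {poly F}) : Prop :=
  [/\ forall n, size (q n) = n.+1,
      q 0%N = 1,
      forall n, (0 < n)%N -> (q n).[0] = 0
    & forall n, Q (q n) = psinum n *: q n.-1].

End PsiCalculus.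

From mathcomp Require Import all_boot all_order all_algebra.
From mathcomp Require Import ring.
Import GRing.Theory.
Local Open Scope ring_scope.
Set Implicit Arguments. Unset Strict Implicit.

(* Write W_y r := \sum_k s_k(y) / k_psi! * Q^k S r (sheffer_sum below).  Evaluated
   at 0, W_y r = r(y): expand S r in the basis (q_n), use (Q^k q_i)(0) = delta_ki / psi_i
   and apply S^-1 back.  Since W_y commutes with every E^a(d_psi),
   (W_y r)(a) = (E^a W_y r)(0) = (W_y E^a r)(0) = (E^a r)(y) = (E^y r)(a),
   the last step being the symmetry of the psi-shift in a and y.  In characteristic 0
   a polynomial is determined by its values, so E^y r = W_y r, and for r := T p the
   theorem follows from T E^y = E^y T. *)

Section LinearOperators.
Variable F : fieldType.
Variable L : {poly F} -> {poly F}.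
Hypothesis linL : lin_op L.

Lemma lin_op0 : L 0 = 0.
Proof.
have := linL 1 0 0; rewrite !scale1r addr0 => L0.
by apply: (addrI (L 0)); rewrite addr0 -L0.
Qed.

Lemma lin_opZ c p : L (c *: p) = c *: L p.
Proof. by have := linL c p 0; rewrite addr0 lin_op0 addr0. Qed.

Lemma lin_opD p r : L (p + r) = L p + L r.
Proof. by have := linL 1 p r; rewrite !scale1r. Qed.

Lemma lin_op_sum (I : Type) (r : seq I) (P : pred I) (f : I -> {poly F}) :
  L (\sum_(i <- r | P i) f i) = \sum_(i <- r | P i) L (f i).
Proof.
elim: r => [|x r IHr]; first by rewrite !big_nil lin_op0.
by rewrite !big_cons; case: (P x); rewrite ?lin_opD IHr.
Qed.

Lemma lin_op_iter k : lin_op (iter k L).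
Proof. by elim: k => [|k IHk] c p r //=; rewrite IHk linL. Qed.

End LinearOperators.

Section PsiShift.
Variable F : fieldType.
Variable psi : nat -> F.
Hypothesis psi_nz : forall n, psi n != 0.
Implicit Types p : {poly F}.

Lemma coef_dpsi p i : (dpsi psi p)`_i = psi i / psi i.+1 * p`_i.+1.
Proof.
rewrite coef_poly; case: ltnP => // le_p_i.
by rewrite (leq_sizeP _ _ (leqW le_p_i)) // mulr0.
Qed.

Lemma coef_iter_dpsi k p i :
  (iter k (dpsi psi) p)`_i = psi i / psi (i + k) * p`_(i + k).
Proof.
elim: k i => [|k IHk] i /=; first by rewrite addn0 divff // mul1r.
rewrite coef_dpsi IHk addSnnS.
by field; rewrite !psi_nz.
Qed.

Lemma coef_Epsi a p m i : (size p <= m)%N ->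
  (Epsi psi a p)`_i = \sum_(k < m) a ^+ k * psi k * (psi i / psi (i + k) * p`_(i + k)).
Proof.
move=> le_p_m; rewrite /Epsi coef_sum -(subnKC le_p_m) big_split_ord /=.
rewrite [X in _ = _ + X]big1 ?addr0 => [|k _].
  by apply: eq_bigr => k _; rewrite coefZ coef_iter_dpsi /psifact invrK.
by rewrite (leq_sizeP _ _ (leqnn _)) ?mulr0 // addnCA leq_addr.
Qed.

Lemma size_Epsi a p : (size (Epsi psi a p) <= size p)%N.
Proof.
apply/leq_sizeP => i le_p_i; rewrite (coef_Epsi a _ (leqnn _)).
apply: big1 => k _.
by rewrite (leq_sizeP _ _ (leqnn _) (i + k)) ?mulr0 // (leq_trans le_p_i) ?leq_addr.
Qed.

Lemma lin_op_Epsi a : lin_op (Epsi psi a).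
Proof.
move=> c p r; apply/polyP => i.
set m := maxn (size p) (size r).
have le_p_m : (size p <= m)%N by rewrite leq_maxl.
have le_r_m : (size r <= m)%N by rewrite leq_maxr.
have le_pr_m : (size (c *: p + r)%R <= m)%N.
  rewrite (leq_trans (size_polyD _ _)) // geq_max le_r_m andbT.
  exact: leq_trans (size_scale_leq _ _) le_p_m.
rewrite coefD coefZ (coef_Epsi a i le_pr_m) (coef_Epsi a i le_p_m).
rewrite (coef_Epsi a i le_r_m) mulr_sumr -big_split /=.
by apply: eq_bigr => k _; rewrite coefD coefZ; ring.
Qed.

Lemma horner0_Epsi a p : psi 0%N = 1 -> (Epsi psi a p).[0] = p.[a].
Proof.
move=> psi0; rewrite horner_coef0 (coef_Epsi a _ (leqnn _)) horner_coef.
by apply: eq_bigr => k _; rewrite add0n psi0; field; rewrite psi_nz.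
Qed.

(* The coefficient of x^i y^k in p(x +_psi y) is psi_i psi_k / psi_(i+k) p_(i+k). *)
Lemma horner_Epsi_sym a b p : (Epsi psi a p).[b] = (Epsi psi b p).[a].
Proof.
rewrite (horner_coef_wide b (size_Epsi a p)) (horner_coef_wide a (size_Epsi b p)).
under eq_bigr => i _ do rewrite (coef_Epsi a _ (leqnn _)) mulr_suml.
under [RHS]eq_bigr => i _ do rewrite (coef_Epsi b _ (leqnn _)) mulr_suml.
rewrite exchange_big /=; apply: eq_bigr => i _; apply: eq_bigr => k _.
by rewrite addnC; ring.
Qed.

End PsiShift.

Lemma poly_span_size_seq (F : fieldType) (q : nat -> {poly F}) m (u : {poly F}) :
  (forall n, size (q n) = n.+1) -> (size u <= m)%N ->
  exists c : nat -> F, u = \sum_(i < m) c i *: q i.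
Proof.
move=> size_q; elim: m u => [|m IHm] u le_u_m.
  by exists (fun _ => 0); rewrite big_ord0; apply/size_poly_leq0P.
have lq_nz : (q m)`_m != 0.
  by have := lead_coef_eq0 (q m); rewrite lead_coefE size_q -size_poly_eq0 size_q => ->.
pose c0 := u`_m / (q m)`_m.
have le_u'_m : (size (u - c0 *: q m)%R <= m)%N.
  apply/leq_sizeP => j; rewrite coefB coefZ leq_eqVlt => /predU1P [<-|lt_m_j].
    by rewrite /c0 divfK ?subrr.
  have le_q_m : (size (q m) <= m.+1)%N by rewrite size_q.
  by rewrite !(leq_sizeP _ _ _ j lt_m_j) // mulr0 subr0.
have [c def_u'] := IHm _ le_u'_m.
exists (fun i => if i == m then c0 else c i).
rewrite big_ord_recr /= eqxx.
under eq_bigr => i _ do rewrite ltn_eqF //.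
by rewrite -def_u' subrK.
Qed.

Section BasicSequence.
Variable F : fieldType.
Variable psi : nat -> F.
Hypothesis psi0 : psi 0%N = 1.
Hypothesis psi_nz : forall n, psi n != 0.
Variables (Q : {poly F} -> {poly F}) (q : nat -> {poly F}).
Hypothesis linQ : lin_op Q.
Hypothesis basic_q : psi_basic_seq psi Q q.
Implicit Types u : {poly F}.

Lemma size_q n : size (q n) = n.+1.
Proof. by case: basic_q. Qed.

Lemma q_0 : q 0%N = 1.
Proof. by case: basic_q. Qed.

Lemma horner0_q n : (0 < n)%N -> (q n).[0] = 0.
Proof. by move=> n_gt0; case: basic_q => _ _ ->. Qed.

Lemma Q_q n : Q (q n) = psinum psi n *: q n.-1.
Proof. by case: basic_q. Qed.

Lemma size_Q m u : (size u <= m.+1)%N -> (size (Q u) <= m)%N.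
Proof.
move=> /(poly_span_size_seq size_q) [c ->]; rewrite lin_op_sum //.
apply: (big_ind (fun x : {poly F} => size x <= m)%N) => //.
- by rewrite size_poly0.
- by move=> x z le_x le_z; rewrite (leq_trans (size_polyD _ _)) // geq_max le_x.
move=> [[|i] lt_i_m] _ /=; rewrite lin_opZ // Q_q scalerA.
  by rewrite mulr0 scale0r size_poly0.
by rewrite (leq_trans (size_scale_leq _ _)) // size_q.
Qed.

Lemma iter_Q_size k u : (size u <= k)%N -> iter k Q u = 0.
Proof.
elim: k u => [|k IHk] u le_u_k; first exact/size_poly_leq0P.
by rewrite iterSr IHk // size_Q.
Qed.

Lemma iter_Q_q k i : (k <= i)%N -> iter k Q (q i) = (psi (i - k) / psi i) *: q (i - k).
Proof.
elim: k => [|k IHk] le_k_i /=; first by rewrite subn0 divff // scale1r.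
have def_ik : (i - k)%N = (i - k.+1).+1 by rewrite subnS prednK // subn_gt0.
rewrite (IHk (ltnW le_k_i)) lin_opZ // Q_q scalerA def_ik /=.
by congr (_ *: _); field; rewrite !psi_nz.
Qed.

Lemma horner0_iter_Q_q k i :
  (iter k Q (q i)).[0] = if k == i then (psi i)^-1 else 0.
Proof.
case: (ltngtP k i) => [lt_k_i|lt_i_k|->].
- by rewrite (iter_Q_q (ltnW lt_k_i)) hornerZ horner0_q ?mulr0 // subn_gt0.
- by rewrite iter_Q_size ?horner0 // size_q.
- by rewrite iter_Q_q // subnn q_0 psi0 hornerZ hornerC mulr1 div1r.
Qed.

End BasicSequence.

Lemma poly_eq_horner_pchar0 (F : fieldType) (p r : {poly F}) :
  [pchar F] =i pred0 -> (forall a, p.[a] = r.[a]) -> p = r.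
Proof.
move=> /pcharf0P natf_eq0 eq_pr; apply/eqP; rewrite -subr_eq0; apply: contraT => nz_pr.
pose rs := [seq i%:R : F | i <- iota 0 (size (p - r))].
have roots_rs : all (root (p - r)) rs.
  by apply/allP => _ /mapP [i _ ->]; rewrite rootE !hornerE eq_pr subrr.
have uniq_rs : uniq rs.
  rewrite map_inj_uniq ?iota_uniq // => m n.
  wlog lt_mn : m n / (m < n)%N => [wlog_mn eq_mn|].
    case: (ltngtP m n) => [lt_mn|lt_nm|//]; first exact: wlog_mn.
    by rewrite (wlog_mn n m lt_nm (esym eq_mn)).
  move/eqP; rewrite eq_sym -subr_eq0 -(natrB _ (ltnW lt_mn)) natf_eq0 subn_eq0.
  by rewrite leqNgt lt_mn.
by have := max_poly_roots nz_pr roots_rs uniq_rs; rewrite size_map size_iota ltnn.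
Qed.

Section ShefferExpansion.
Variable F : fieldType.
Variable psi : nat -> F.
Hypothesis charF : [pchar F] =i pred0.
Hypothesis psi0 : psi 0%N = 1.
Hypothesis psi_nz : forall n, psi n != 0.
Variables (Q : {poly F} -> {poly F}) (q : nat -> {poly F}).
Hypothesis sigmaQ : in_Sigma_psi psi Q.
Hypothesis basic_q : psi_basic_seq psi Q q.
Variables (S Sinv : {poly F} -> {poly F}).
Hypothesis sigmaS : in_Sigma_psi psi S.
Hypothesis linSinv : lin_op Sinv.
Hypothesis SK : forall p, Sinv (S p) = p.
Variable y : F.
Implicit Types r : {poly F}.

Definition sheffer_sum n r :=
  \sum_(k < n) (((Sinv (q k)).[y] / psifact psi k) *: iter k Q (S r)).

Lemma Epsi_sheffer_sum n a r :
  Epsi psi a (sheffer_sum n r) = sheffer_sum n (Epsi psi a r).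
Proof.
have linE := lin_op_Epsi psi_nz a.
have iterQ_Epsi k u : iter k Q (Epsi psi a u) = Epsi psi a (iter k Q u).
  by elim: k => //= k ->; case: sigmaQ => _ ->.
rewrite /sheffer_sum lin_op_sum //; apply: eq_bigr => k _.
by case: sigmaS => _ ->; rewrite lin_opZ // iterQ_Epsi.
Qed.

Lemma horner0_sheffer_sum n r : (size (S r) <= n)%N -> (sheffer_sum n r).[0] = r.[y].
Proof.
have linQ : lin_op Q by case: sigmaQ.
move=> /(poly_span_size_seq (size_q basic_q)) [c def_Sr].
rewrite /sheffer_sum -[in RHS](SK r) def_Sr (lin_op_sum linSinv) !horner_sum.
apply: eq_bigr => k _.
have linQk := lin_op_iter linQ k.
rewrite hornerZ (lin_op_sum linQk) horner_sum.
under eq_bigr => i _ do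
  rewrite (lin_opZ linQk) hornerZ (horner0_iter_Q_q psi0 psi_nz linQ basic_q).
rewrite (bigD1 k) //= eqxx big1 => [|i neq_ik]; last by rewrite ifN ?mulr0 // eq_sym.
by rewrite addr0 (lin_opZ linSinv) hornerZ /psifact invrK; field; rewrite psi_nz.
Qed.

Lemma Epsi_sheffer_expansion n r : (size (S r) <= n)%N -> Epsi psi y r = sheffer_sum n r.
Proof.
move=> le_Sr_n; apply: poly_eq_horner_pchar0 charF _ => a.
rewrite -(horner0_Epsi psi_nz a (sheffer_sum n r) psi0) Epsi_sheffer_sum.
rewrite horner0_sheffer_sum.
  by rewrite horner_Epsi_sym.
by case: sigmaS => _ ->; rewrite (leq_trans (size_Epsi psi_nz _ _)).
Qed.

End ShefferExpansion.
Unset Implicit Arguments.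

Theorem mainTheorem15 (F : fieldType) (psi : nat -> F)
  (charF : [pchar F] =i pred0)
  (psi0 : psi 0%N = 1) (psi_nz : forall n, psi n != 0)
  (Q : {poly F} -> {poly F}) (q : nat -> {poly F})
  (HQ : psi_delta psi Q) (Hq : psi_basic_seq psi Q q)
  (S Sinv : {poly F} -> {poly F})
  (HS : in_Sigma_psi psi S) (HSinv : lin_op Sinv)
  (HSSinv : forall p, S (Sinv p) = p) (HSinvS : forall p, Sinv (S p) = p)
  (T : {poly F} -> {poly F}) (HT : in_Sigma_psi psi T)
  (p : {poly F}) (y : F) :
  let s := fun n => Sinv (q n) in
  exists N : nat, forall n : nat, (N <= n)%N ->
    T (Epsi psi y p) =
    \sum_(k < n) (((s k).[y] / psifact psi k) *: iter k Q (S (T p))).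
Proof.
move=> s; exists (size (S (T p))) => n le_STp_n.
have [_ ->] := HT.
by rewrite (Epsi_sheffer_expansion charF psi0 psi_nz HQ.1 Hq HS HSinv HSinvS y le_STp_n).
Qed.
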